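(* Let $r>1$, $p\in(0,1)$, $q=1-p$, and $z>1$. Let $g_z:\mathbb{Z}_+\to\mathbb{R}$ be defined by $g_z(0)=0$ and, for $k\ge 1$, $$g_z(k)=-\sum_{j=k}^{\infty}\frac{r(r+1)\cdots(r+j-1)}{r(r+1)\cdots(r+k-1)}\,\frac{(k-1)!}{j!}\,q^{j-k}\Big[(j-z)^+-\mathbb{E}[(\mathrm{N}_{r,p}-z)^+]\Big].$$ Then for every integer $k\ge 1$, $$|\Delta g_z(k)|\le\begin{cases}\frac{1}{z}\left(2p^{-(r+1)}-p^{-1}\right) & \text{if } k\ge z,\\[2pt] \frac{1}{z}\left((1+q^{-1})p^{-(r+2)}-p^{-2}\right) & \text{if } 2\le k<z,\\[2pt] \frac{r+1}{z}\left(2p^{-(r+2)}-p^{-2}\right) & \text{if } k=1.\end{cases}$$ In particular, for all $k\ge1$, $|\Delta g_z(k)|\le \vartheta_{r,p,z}:=\frac{r+1}{z}\left((1+q^{-1})p^{-(r+2)}-p^{-2}\right)$.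
   Context: $\mathbb{Z}_+=\{0,1,2,\ldots\}$. $x^+=\max\{x,0\}$. $\mathrm{N}_{r,p}$ denotes a negative binomial random variable with $\mathbb{P}(\mathrm{N}_{r,p}=k)=\binom{r+k-1}{k}p^rq^k=\frac{\Gamma(r+k)}{k!\,\Gamma(r)}p^rq^k$ for $k\in\mathbb{Z}_+$, where $r>1$ and $q=1-p\in(0,1)$. $\Delta g(k)=g(k+1)-g(k)$ is the forward difference. *)

From Stdlib Require Import Reals Lra Arith Factorial.
From Coquelicot Require Import Coquelicot.
Open Scope R_scope.

(* rising factorial r(r+1)...(r+n-1); rising r 0 = 1.
   Note Gamma(r+k)/Gamma(r) = rising r k. *)
Fixpoint rising (r : R) (n : nat) : R :=
  match n with
  | O => 1
  | S m => rising r m * (r + INR m)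
  end.

Definition pospart (x : R) : R := Rmax x 0.

Definition negbin_pmf (r p : R) (k : nat) : R :=
  rising r k / INR (fact k) * Rpower p r * (1 - p) ^ k.

Definition negbin_Epos (r p z : R) : R :=
  Series (fun k => negbin_pmf r p k * pospart (INR k - z)).

Definition g_z (r p z : R) (k : nat) : R :=
  match k with
  | O => 0
  | S _ =>
    - Series (fun i : nat =>
        let j := (k + i)%nat in
        rising r j / rising r k * INR (fact (k - 1)) / INR (fact j)
        * (1 - p) ^ (j - k)
        * (pospart (INR j - z) - negbin_Epos r p z))
  end.

Definition fdiff (g : nat -> R) (k : nat) : R := g (S k) - g k.

From Stdlib Require Import Reals Lra Lia Factorial.
From Coquelicot Require Import Coquelicot.
Open Scope R_scope.

(* Write q = 1 - p and u_n = r(r+1)...(r+n-1)/n! q^n, so that P(N = n) = p^r u_n.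
   Reindexing the series defining g_z gives g_z(k) = -G_k / (k u_k), where
   G_k = sum_(j>=k) u_j (h(j) - c), h(j) = (j-z)^+ and c = E[(N-z)^+]; with the
   recursion (k+1) u_(k+1) = q(r+k) u_k the difference is
     Delta g_z(k) = (q(r+k) G_k - k G_(k+1)) / (k q (r+k) u_k).  Then:
   - for k >= z, h is linear on the tail, the numerator is (q r - p z - p c) V_k with
     V_k = sum_(j>=k) (j-k) u_j, and |q r - p z - p c| <= p z;
   - for k < z, G_k = c L_k, the numerator is -c (k u_k + (p k - q r) L_k), and
     c p^(-r) = sum_j u_j h(j) is bounded by the weighted tail S_k, which has a
     closed form through the moment identities. *)

(* Generalised binomial coefficient of (1 - t)^(-r): r(r+1)...(r+n-1)/n!. *)
Definition binc (r : R) (n : nat) : R := rising r n / INR (fact n).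

Definition nb_weight (r q : R) (n : nat) : R := binc r n * q ^ n.

Lemma rising_pos (r : R) (n : nat) : 0 < r -> 0 < rising r n.
Proof.
  intros hr; induction n as [|n IH]; simpl; [lra|].
  apply Rmult_lt_0_compat; [exact IH|]. pose proof (pos_INR n); lra.
Qed.

Lemma binc_pos (r : R) (n : nat) : 0 < r -> 0 < binc r n.
Proof. intros hr. apply Rdiv_lt_0_compat; [apply rising_pos; lra | apply INR_fact_lt_0]. Qed.

Lemma binc_succ (r : R) (n : nat) : binc r (S n) * INR (S n) = (r + INR n) * binc r n.
Proof.
  unfold binc; simpl rising. rewrite fact_simpl, mult_INR.
  pose proof (INR_fact_lt_0 n). pose proof (lt_0_INR (S n) (Nat.lt_0_succ n)).
  field. lra.
Qed.

Lemma nb_weight_succ (r q : R) (n : nat) :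
  nb_weight r q (S n) * INR (S n) = q * (r + INR n) * nb_weight r q n.
Proof.
  unfold nb_weight. simpl pow.
  replace (binc r (S n) * (q * q ^ n) * INR (S n)) with (q * q ^ n * (binc r (S n) * INR (S n))) by ring.
  rewrite binc_succ. ring.
Qed.

Lemma nb_weight_ratio (r q : R) (n : nat) :
  nb_weight r q (S n) = q * (r + INR n) / (INR n + 1) * nb_weight r q n.
Proof.
  pose proof (nb_weight_succ r q n) as E. rewrite S_INR in E. pose proof (pos_INR n).
  apply (Rmult_eq_reg_r (INR n + 1)); [|lra]. rewrite E. field. lra.
Qed.

Lemma nb_weight_0 (r q : R) : nb_weight r q 0 = 1.
Proof. unfold nb_weight, binc; simpl; field. Qed.

Lemma nb_weight_1 (r q : R) : nb_weight r q 1 = r * q.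
Proof. unfold nb_weight, binc; simpl; field. Qed.

(* The library's summability closure lemmas, specialised to real sequences so
   that they unify with goals written with [+] and [*]. *)
Lemma ex_series_Rplus (a b : nat -> R) :
  ex_series a -> ex_series b -> ex_series (fun n => a n + b n).
Proof. exact (ex_series_plus a b). Qed.

Lemma ex_series_Rscal (c : R) (a : nat -> R) : ex_series a -> ex_series (fun n => c * a n).
Proof. exact (ex_series_scal_l c a). Qed.

(* A nonnegative series has a nonnegative sum; a pointwise comparison of two
   summable series compares their sums (the library's [Series_le] needs a >= 0). *)
Lemma Series_nonneg (a : nat -> R) : (forall n, 0 <= a n) -> ex_series a -> 0 <= Series a.
Proof.
  intros Ha He. replace 0 with (Series (fun n => 0 * a n)).
  - apply Series_le; [|exact He]. intros n; specialize (Ha n); lra.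
  - rewrite Series_scal_l; ring.
Qed.

Lemma Series_mono (a b : nat -> R) :
  (forall n, a n <= b n) -> ex_series a -> ex_series b -> Series a <= Series b.
Proof.
  intros Hab Ha Hb.
  assert (H : 0 <= Series (fun n => b n - a n)).
  { apply Series_nonneg; [intros n; specialize (Hab n); lra|].
    exact (ex_series_minus b a Hb Ha). }
  rewrite Series_minus in H by assumption. lra.
Qed.

Section Weights.

Variables r p : R.
Hypothesis hr : 1 < r.
Hypothesis hp : 0 < p < 1.
Local Notation q := (1 - p).
Local Notation u := (nb_weight r (1 - p)).

Lemma nb_weight_pos (n : nat) : 0 < u n.
Proof. apply Rmult_lt_0_compat; [apply binc_pos; lra | apply pow_lt; lra]. Qed.

(* Summability: by d'Alembert, (n+1)^2 u_n is summable since its ratio tends to q < 1. *)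
Lemma ex_series_sq_weight : ex_series (fun n => (INR n + 1) ^ 2 * u n).
Proof.
  assert (Hinv : is_lim_seq (fun n => / (INR n + 1)) 0).
  { assert (H : is_lim_seq (fun n => INR n + 1) p_infty).
    { apply is_lim_seq_ext with (fun n => INR (S n)); [intros; apply S_INR|].
      apply (is_lim_seq_incr_1 INR p_infty), is_lim_seq_INR. }
    apply (is_lim_seq_inv _ _ H); discriminate. }
  apply ex_series_Rabs, (ex_series_DAlembert _ q); [lra| |].
  - intros n. apply Rgt_not_eq, Rmult_lt_0_compat; [|apply nb_weight_pos].
    apply pow_lt. pose proof (pos_INR n); lra.
  - apply is_lim_seq_ext with
      (fun n => q * ((1 + / (INR n + 1)) ^ 2 * (1 + (r - 1) * / (INR n + 1)))).
    { intros n. rewrite nb_weight_ratio, S_INR. pose proof (nb_weight_pos n). pose proof (pos_INR n).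
      rewrite Rabs_pos_eq; [field; lra|].
      apply Rdiv_le_0_compat; [|apply Rmult_lt_0_compat; [apply pow_lt|]; lra].
      apply Rmult_le_pos; [apply pow_le; lra|].
      apply Rmult_le_pos; [|lra]. apply Rdiv_le_0_compat; nra. }
    replace (Finite q) with (Rbar_mult q ((1 + 0) ^ 2 * (1 + (r - 1) * 0))) by (simpl; f_equal; ring).
    apply is_lim_seq_scal_l, is_lim_seq_mult'.
    + simpl. apply is_lim_seq_mult'; [apply is_lim_seq_plus'; [apply is_lim_seq_const|exact Hinv]|].
      apply is_lim_seq_mult'; [apply is_lim_seq_plus'; [apply is_lim_seq_const|exact Hinv]|].
      apply is_lim_seq_const.
    + apply is_lim_seq_plus'; [apply is_lim_seq_const|].
      apply is_lim_seq_mult'; [apply is_lim_seq_const|exact Hinv].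
Qed.

Lemma ex_series_weighted (w : nat -> R) :
  (forall n, Rabs (w n) <= (INR n + 1) ^ 2) -> ex_series (fun n => w n * u n).
Proof.
  intros Hw.
  apply (ex_series_le (fun n => w n * u n) (fun n => (INR n + 1) ^ 2 * u n));
    [|exact ex_series_sq_weight].
  intros n. change (norm (w n * u n)) with (Rabs (w n * u n)).
  pose proof (nb_weight_pos n). rewrite Rabs_mult, (Rabs_pos_eq (u n)) by lra.
  apply Rmult_le_compat_r; [lra|apply Hw].
Qed.

Lemma ex_series_weight : ex_series u.
Proof.
  apply (ex_series_ext (fun n => 1 * u n)); [intros n; apply Rmult_1_l|].
  apply ex_series_weighted. intros n. pose proof (pos_INR n). rewrite Rabs_R1. nra.
Qed.

Lemma ex_series_weight_mom1 : ex_series (fun n => INR n * u n).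
Proof. apply ex_series_weighted. intros n. pose proof (pos_INR n). rewrite Rabs_pos_eq; nra. Qed.

Lemma ex_series_weight_mom2 : ex_series (fun n => INR n ^ 2 * u n).
Proof.
  apply ex_series_weighted. intros n. pose proof (pos_INR n).
  rewrite Rabs_pos_eq by (apply pow_le; lra). nra.
Qed.

End Weights.

Lemma is_derive_Rpower_1m (r t : R) : t < 1 ->
  is_derive (fun t => Rpower (1 - t) r) t (- (r * Rpower (1 - t) (r - 1))).
Proof.
  intros ht. apply is_derive_Reals.
  replace (- (r * Rpower (1 - t) (r - 1))) with (r * Rpower (1 - t) (r - 1) * (-1)) by ring.
  apply (derivable_pt_lim_comp (fun t => 1 - t) (fun x => Rpower x r)).
  - apply is_derive_Reals. auto_derive; auto.
  - apply derivable_pt_lim_power. lra.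
Qed.

Lemma is_derive_binomial_partial (r t : R) (N : nat) : t < 1 ->
  is_derive (fun t => Rpower (1 - t) r * sum_f_R0 (fun n => binc r n * t ^ n) N) t
    (- (Rpower (1 - t) (r - 1) * (binc r (S N) * INR (S N) * t ^ N))).
Proof.
  intros ht.
  assert (Hpow : Rpower (1 - t) r = Rpower (1 - t) (r - 1) * (1 - t)).
  { rewrite <- (Rpower_1 (1 - t)) at 3 by lra. rewrite <- Rpower_plus. f_equal; ring. }
  induction N as [|N IH].
  - apply (is_derive_ext (fun t => Rpower (1 - t) r)).
    { intros s; simpl. unfold binc; simpl. field. }
    replace (- (Rpower (1 - t) (r - 1) * (binc r 1 * INR 1 * t ^ 0)))
      with (- (r * Rpower (1 - t) (r - 1))) by (unfold binc; simpl; field).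
    apply is_derive_Rpower_1m; exact ht.
  - apply (is_derive_ext (fun t => Rpower (1 - t) r * sum_f_R0 (fun n => binc r n * t ^ n) N
                                   + binc r (S N) * (Rpower (1 - t) r * t ^ S N))).
    { intros s; simpl; ring. }
    replace (- (Rpower (1 - t) (r - 1) * (binc r (S (S N)) * INR (S (S N)) * t ^ S N)))
      with (- (Rpower (1 - t) (r - 1) * (binc r (S N) * INR (S N) * t ^ N))
            + binc r (S N) * (- (r * Rpower (1 - t) (r - 1)) * t ^ S N
                              + Rpower (1 - t) r * (INR (S N) * 1 * t ^ N))).
    + assert (Hmono : is_derive (fun t => t ^ S N) t (INR (S N) * 1 * t ^ N))
        by (auto_derive; [exact I | destruct N; simpl; ring]).
      apply (is_derive_plus _ _ _ _ _ IH), is_derive_scal.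
      apply (is_derive_mult (fun t => Rpower (1 - t) r) (fun t => t ^ S N));
        [apply is_derive_Rpower_1m; exact ht | exact Hmono | intros; apply Rmult_comm].
    + rewrite (binc_succ r (S N)), Hpow. simpl pow. rewrite !S_INR. ring.
Qed.

Lemma Rpower_base_1 (y : R) : Rpower 1 y = 1.
Proof. unfold Rpower. rewrite ln_1, Rmult_0_r. apply exp_0. Qed.

Section Binomial.

Variables r p : R.
Hypothesis hr : 1 < r.
Hypothesis hp : 0 < p < 1.
Local Notation q := (1 - p).
Local Notation u := (nb_weight r (1 - p)).

(* Mean value theorem on [0, q] for the telescoping derivative above: the
   truncated binomial expansion misses p^(-r) by at most (N+1) u_(N+1) p^(-r). *)
Lemma binomial_partial_error (N : nat) :
  0 <= 1 - Rpower p r * sum_f_R0 u N <= INR (S N) * u (S N).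
Proof.
  assert (Hsum0 : sum_f_R0 (fun n => binc r n * 0 ^ n) N = 1).
  { induction N as [|N IH]; simpl; [unfold binc; simpl; field | rewrite IH; ring]. }
  set (f := fun t => Rpower (1 - t) r * sum_f_R0 (fun n => binc r n * t ^ n) N).
  set (df := fun t => - (Rpower (1 - t) (r - 1) * (binc r (S N) * INR (S N) * t ^ N))).
  destruct (MVT_gen f 0 q df) as [c [Hc Hmvt]].
  { intros x Hx. rewrite Rmax_right in Hx by lra. apply is_derive_binomial_partial. lra. }
  { intros x Hx. rewrite Rmax_right in Hx by lra. apply continuity_pt_filterlim.
    apply (ex_derive_continuous f x). eexists. apply is_derive_binomial_partial. lra. }
  rewrite Rmin_left, Rmax_right in Hc by lra.
  assert (Hf0 : f 0 = 1).
  { unfold f. rewrite Hsum0. replace (1 - 0) with 1 by ring. rewrite Rpower_base_1. ring. }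
  assert (Hfq : f q = Rpower p r * sum_f_R0 u N).
  { unfold f. replace (1 - q) with p by ring. reflexivity. }
  rewrite <- Hfq. unfold df in Hmvt. rewrite Hf0 in Hmvt.
  assert (Hrp0 : 0 < Rpower (1 - c) (r - 1)) by apply exp_pos.
  assert (Hrp1 : Rpower (1 - c) (r - 1) <= 1).
  { apply Rle_trans with (Rpower 1 (r - 1)); [apply Rle_Rpower_l; lra | rewrite Rpower_base_1; lra]. }
  pose proof (binc_pos r (S N) ltac:(lra)).
  assert (HcN : 0 <= c ^ N <= q ^ N) by (split; [apply pow_le | apply pow_incr]; lra).
  assert (HN : 0 < INR (S N)) by (apply lt_0_INR; lia).
  assert (Hx : 0 <= binc r (S N) * INR (S N) * c ^ N) by (apply Rmult_le_pos; [|lra]; nra).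
  assert (Hy : binc r (S N) * INR (S N) * c ^ N <= binc r (S N) * INR (S N) * q ^ N)
    by (apply Rmult_le_compat_l; nra).
  assert (E : 1 - f q = Rpower (1 - c) (r - 1) * (binc r (S N) * INR (S N) * c ^ N) * q) by lra.
  rewrite E. unfold nb_weight. simpl pow. split.
  - apply Rmult_le_pos; [apply Rmult_le_pos|]; lra.
  - apply Rle_trans with (1 * (binc r (S N) * INR (S N) * q ^ N) * q); [|right; ring].
    apply Rmult_le_compat_r; [lra|]. apply Rmult_le_compat; lra.
Qed.

Lemma binomial_series : is_series u (Rpower p (- r)).
Proof.
  set (P := Rpower p (- r)).
  assert (HP : P * Rpower p r = 1) by (unfold P; rewrite Rpower_Ropp; field; apply Rgt_not_eq, exp_pos).
  assert (HP0 : 0 < P) by apply exp_pos.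
  assert (Hterm : is_lim_seq (fun N => INR (S N) * u (S N)) 0).
  { apply (is_lim_seq_incr_1 (fun N => INR N * u N)), ex_series_lim_0, ex_series_weight_mom1; assumption. }
  assert (Herr : is_lim_seq (fun N => P - sum_f_R0 u N) 0).
  { apply is_lim_seq_le_le with (fun _ => 0) (fun N => P * (INR (S N) * u (S N))).
    - intros N. pose proof (binomial_partial_error N).
      replace (P - sum_f_R0 u N) with (P * (1 - Rpower p r * sum_f_R0 u N))
        by (rewrite Rmult_minus_distr_l, <- Rmult_assoc, HP; ring).
      split; [apply Rmult_le_pos | apply Rmult_le_compat_l]; lra.
    - apply is_lim_seq_const.
    - replace (Finite 0) with (Rbar_mult P 0) by (simpl; f_equal; ring).
      apply is_lim_seq_scal_l, Hterm. }
  apply is_series_Reals, is_lim_seq_Reals.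
  apply is_lim_seq_ext with (fun N => P - (P - sum_f_R0 u N)); [intros; ring|].
  replace (Finite P) with (Finite (P - 0)) by (f_equal; ring).
  apply is_lim_seq_minus'; [apply is_lim_seq_const | exact Herr].
Qed.

Lemma Series_weight : Series u = Rpower p (- r).
Proof. apply is_series_unique, binomial_series. Qed.

End Binomial.

Fixpoint head_sum (r q : R) (k : nat) : R :=
  match k with
  | O => 0
  | S m => head_sum r q m + nb_weight r q m
  end.

Definition tail_sum (r q : R) (k : nat) : R := Series (fun i => nb_weight r q (k + i)).

Definition tail_mom (r q : R) (k : nat) : R :=
  Series (fun i => INR (k + i) * nb_weight r q (k + i)).

Definition tail_overshoot (r q : R) (k : nat) : R := tail_mom r q k - INR k * tail_sum r q k.

(* S_k = sum_(n>=2) (n+k-1)(n-1) u_n, the weighted tail that controls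
   E[(N-z)^+] when k < z. *)
Definition shifted_weight (r q : R) (k n : nat) : R :=
  (INR n + INR k - 1) * (INR n - 1) * nb_weight r q n.

Definition shifted_mom (r q : R) (k : nat) : R :=
  Series (fun i => shifted_weight r q k (2 + i)).

Lemma Series_tail_succ (a : nat -> R) (k : nat) : ex_series a ->
  Series (fun i => a (k + i)%nat) = a k + Series (fun i => a (S k + i)%nat).
Proof.
  intros Ha. rewrite Series_incr_1 by (apply (ex_series_incr_n a k), Ha).
  rewrite Nat.add_0_r. f_equal. apply Series_ext. intros i. f_equal. lia.
Qed.

Section Moments.

Variables r p : R.
Hypothesis hr : 1 < r.
Hypothesis hp : 0 < p < 1.
Local Notation q := (1 - p).
Local Notation u := (nb_weight r (1 - p)).
Local Notation M := (Series (nb_weight r (1 - p))).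
Local Notation U := (tail_sum r (1 - p)).
Local Notation L := (head_sum r (1 - p)).
Local Notation T := (tail_mom r (1 - p)).

Let u_pos := nb_weight_pos r p hr hp.
Let ex_u := ex_series_weight r p hr hp.
Let ex_mom1 := ex_series_weight_mom1 r p hr hp.
Let ex_mom2 := ex_series_weight_mom2 r p hr hp.

Lemma ex_series_tail (k : nat) : ex_series (fun i => u (k + i)).
Proof. apply (ex_series_incr_n u k), ex_u. Qed.

Lemma ex_series_tail_mom (k : nat) : ex_series (fun i => INR (k + i) * u (k + i)).
Proof. apply (ex_series_incr_n (fun n => INR n * u n) k), ex_mom1. Qed.

Lemma tail_sum_nonneg (k : nat) : 0 <= U k.
Proof. apply Series_nonneg; [intros; apply Rlt_le, u_pos | apply ex_series_tail]. Qed.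

Lemma tail_sum_succ (k : nat) : U k = u k + U (S k).
Proof. apply Series_tail_succ, ex_u. Qed.

Lemma head_sum_nonneg (k : nat) : 0 <= L k.
Proof. induction k as [|k IH]; simpl; [lra|]. pose proof (u_pos k); lra. Qed.

Lemma head_tail (k : nat) : M = L k + U k.
Proof.
  induction k as [|k IH].
  - simpl. rewrite Rplus_0_l. apply Series_ext. reflexivity.
  - simpl. rewrite IH, tail_sum_succ. ring.
Qed.

(* Shifting the index in the tail first moment with the weight recursion gives
   p T_k = k u_k + q r U_k; for k = 0 this is the mean p E[N] = q r. *)
Lemma tail_mom_eq (k : nat) : p * T k = INR k * u k + q * r * U k.
Proof.
  assert (Hshift : Series (fun i => INR (S k + i) * u (S k + i)) = q * r * U k + q * T k).
  { unfold tail_sum, tail_mom. rewrite <- !Series_scal_l, <- Series_plus;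
      [| apply ex_series_Rscal, ex_series_tail | apply ex_series_Rscal, ex_series_tail_mom].
    apply Series_ext. intros i. change (S k + i)%nat with (S (k + i)).
    rewrite Rmult_comm, nb_weight_succ. ring. }
  assert (E : T k = INR k * u k + (q * r * U k + q * T k)).
  { unfold tail_mom at 1. rewrite (Series_tail_succ (fun n => INR n * u n) k ex_mom1), Hshift.
    reflexivity. }
  lra.
Qed.

Lemma mean_eq : p * Series (fun n => INR n * u n) = q * r * M.
Proof.
  pose proof (tail_mom_eq 0) as E. rewrite Rmult_0_l, Rplus_0_l in E.
  unfold tail_mom, tail_sum in E. simpl plus in E. exact E.
Qed.

(* Same index shift for the second moment: p E[N^2] = q((r+1) E[N] + r). *)
Lemma second_mom_eq :
  p * Series (fun n => INR n ^ 2 * u n) = q * ((r + 1) * Series (fun n => INR n * u n) + r * M).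
Proof.
  set (m1 := Series (fun n => INR n * u n)). set (m2 := Series (fun n => INR n ^ 2 * u n)).
  assert (Hshift : Series (fun n => INR (S n) ^ 2 * u (S n)) = q * (r + 1) * m1 + (q * r * M + q * m2)).
  { unfold m1, m2.
    rewrite <- !Series_scal_l, <- !Series_plus;
      try (repeat apply ex_series_Rplus; apply ex_series_Rscal; assumption).
    apply Series_ext. intros n.
    replace (INR (S n) ^ 2 * u (S n)) with (INR (S n) * (u (S n) * INR (S n))) by ring.
    rewrite nb_weight_succ, S_INR. ring. }
  assert (E : m2 = q * (r + 1) * m1 + (q * r * M + q * m2)).
  { unfold m2 at 1. rewrite (Series_incr_1 _ ex_mom2), Hshift. simpl. ring. }
  lra.
Qed.

Lemma tail_mom_ge (k : nat) : INR k * U k <= T k.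
Proof.
  unfold tail_sum, tail_mom. rewrite <- Series_scal_l.
  apply Series_mono; [| apply ex_series_Rscal, ex_series_tail | apply ex_series_tail_mom].
  intros i. apply Rmult_le_compat_r; [apply Rlt_le, u_pos | apply le_INR; lia].
Qed.

(* For k >= 1 the ratios u_(j+1)/u_j = q(r+j)/(j+1) decrease in j, so the tail
   from k is dominated termwise by u_k times the tail from 1. *)
Lemma weight_shift_upper (k i : nat) : (1 <= k)%nat -> u (k + i) * (r * q) <= u k * u (S i).
Proof.
  intros hk. induction i as [|i IH].
  - rewrite Nat.add_0_r, nb_weight_1. lra.
  - replace (k + S i)%nat with (S (k + i)) by lia.
    rewrite (nb_weight_ratio r q (k + i)), (nb_weight_ratio r q (S i)), plus_INR, S_INR.
    pose proof (pos_INR i). assert (1 <= INR k) by (apply (le_INR 1); exact hk).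
    pose proof (u_pos (k + i)). pose proof (u_pos k). pose proof (u_pos (S i)).
    assert (Hrat : (r + (INR k + INR i)) / (INR k + INR i + 1) <= (r + (INR i + 1)) / (INR i + 1 + 1)).
    { apply (Rmult_le_reg_r ((INR k + INR i + 1) * (INR i + 1 + 1))); [nra|].
      field_simplify; lra || nra. }
    assert (0 <= (r + (INR k + INR i)) / (INR k + INR i + 1)) by (apply Rdiv_le_0_compat; lra).
    replace (q * (r + (INR k + INR i)) / (INR k + INR i + 1) * u (k + i) * (r * q))
      with (q * ((r + (INR k + INR i)) / (INR k + INR i + 1)) * (u (k + i) * (r * q))) by (field; lra).
    replace (u k * (q * (r + (INR i + 1)) / (INR i + 1 + 1) * u (S i)))
      with (q * ((r + (INR i + 1)) / (INR i + 1 + 1)) * (u k * u (S i))) by (field; lra).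
    apply Rmult_le_compat; try nra. apply Rmult_le_pos; nra.
Qed.

Lemma tail_sum_upper (k : nat) : (1 <= k)%nat -> U k * (r * q) <= u k * (M - 1).
Proof.
  intros hk. unfold tail_sum.
  replace (M - 1) with (Series (fun i => u (S i))) by (rewrite (Series_incr_1 _ ex_u), nb_weight_0; ring).
  rewrite <- Series_scal_r, <- Series_scal_l. apply Series_le.
  - intros i. split; [apply Rmult_le_pos; [apply Rlt_le, u_pos | nra] | apply weight_shift_upper, hk].
  - apply ex_series_Rscal, (ex_series_incr_1 u), ex_u.
Qed.

(* Since r >= 1 the ratios u_(j+1)/u_j are at least q: a geometric lower bound. *)
Lemma weight_shift_lower (m i : nat) : q ^ i * u m <= u (m + i).
Proof.
  induction i as [|i IH]; [rewrite Nat.add_0_r; simpl; lra|].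
  replace (m + S i)%nat with (S (m + i)) by lia. rewrite nb_weight_ratio.
  pose proof (pos_INR (m + i)). pose proof (u_pos (m + i)).
  assert (1 <= (r + INR (m + i)) / (INR (m + i) + 1))
    by (apply (Rmult_le_reg_r (INR (m + i) + 1)); [lra | field_simplify; lra]).
  replace (q * (r + INR (m + i)) / (INR (m + i) + 1) * u (m + i))
    with (q * ((r + INR (m + i)) / (INR (m + i) + 1)) * u (m + i)) by (field; lra).
  simpl pow. apply Rle_trans with (q * u (m + i)); [rewrite Rmult_assoc; apply Rmult_le_compat_l; lra|].
  rewrite Rmult_assoc. apply Rmult_le_compat_l; nra.
Qed.

Lemma tail_sum_lower (m : nat) : u m <= p * U m.
Proof.
  assert (H : u m * / p <= U m).
  { unfold tail_sum. replace (/ p) with (Series (fun i => q ^ i))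
      by (rewrite Series_geom by (rewrite Rabs_pos_eq; lra); f_equal; ring).
    rewrite <- Series_scal_l. apply Series_le; [|apply ex_series_tail].
    intros i. split; [apply Rmult_le_pos; [apply Rlt_le, u_pos | apply pow_le; lra]|].
    rewrite Rmult_comm. apply weight_shift_lower. }
  apply Rmult_le_compat_l with (r := p) in H; [|lra].
  rewrite <- Rmult_assoc, (Rmult_comm p), Rmult_assoc, Rinv_r, Rmult_1_r in H by lra. exact H.
Qed.

(* Bernoulli-type bound p^(-r) - 1 >= r q / p (from U_1 >= u_1 / p), hence p^(-r) >= 1. *)
Lemma weight_sum_lower : q * r <= p * (M - 1).
Proof.
  pose proof (tail_sum_lower 1) as H. rewrite nb_weight_1 in H.
  replace (M - 1) with (U 1); [lra|].
  rewrite (head_tail 1). simpl. rewrite nb_weight_0. ring.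
Qed.

Lemma weight_sum_ge_1 : 1 <= M.
Proof. pose proof weight_sum_lower. nra. Qed.

Local Notation V := (tail_overshoot r (1 - p)).

Lemma tail_overshoot_nonneg (k : nat) : 0 <= V k.
Proof. unfold tail_overshoot. pose proof (tail_mom_ge k). lra. Qed.

Lemma tail_overshoot_eq (k : nat) : p * V k = INR k * u k - (p * INR k - q * r) * U k.
Proof. unfold tail_overshoot. pose proof (tail_mom_eq k). nra. Qed.

(* Overshoot estimate when p k >= q r: the tail is at least u_k + u_(k+1)/p,
   which gives p^2 V_k <= q (r+k) u_k (p + q r) / (k+1). *)
Lemma tail_overshoot_bound_heavy (k : nat) : (1 <= k)%nat -> q * r <= p * INR k ->
  p * (p * V k) <= q * (r + INR k) * u k * (p + q * r) / (INR k + 1).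
Proof.
  intros hk Hheavy. pose proof (tail_overshoot_eq k) as HV.
  assert (HK : 1 <= INR k) by (apply (le_INR 1); exact hk).
  pose proof (tail_sum_lower (S k)) as Hlow. rewrite nb_weight_ratio in Hlow.
  assert (HpU : p * u k + q * (r + INR k) / (INR k + 1) * u k <= p * U k)
    by (rewrite (tail_sum_succ k); lra).
  apply Rle_trans with
    (p * INR k * u k - (p * INR k - q * r) * (p * u k + q * (r + INR k) / (INR k + 1) * u k)).
  - replace (p * (p * V k)) with (p * INR k * u k - (p * INR k - q * r) * (p * U k)) by nra.
    assert (0 <= p * INR k - q * r) by lra. nra.
  - right. field. lra.
Qed.

(* Overshoot estimate when p k < q r: then k < p^(-r) - 1 and the tail is at most
   u_k (p^(-r) - 1) / (r q), so p V_k <= u_k (k + p^(-r) - 1). *)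
Lemma tail_overshoot_bound_light (k : nat) : (1 <= k)%nat -> p * INR k < q * r ->
  p * V k <= u k * (INR k + (M - 1)) /\ INR k <= M - 1.
Proof.
  intros hk Hlight. pose proof (tail_overshoot_eq k) as HV. pose proof weight_sum_lower.
  pose proof (tail_sum_upper k hk). pose proof (tail_sum_nonneg k). pose proof (pos_INR k).
  assert (0 <= p * INR k * U k) by (apply Rmult_le_pos; nra).
  split; nra.
Qed.

Lemma tail_overshoot_bound (k : nat) : (1 <= k)%nat ->
  p * p * INR k * V k <= q * (r + INR k) * u k * (2 * M - 1).
Proof.
  intros hk. pose proof (tail_overshoot_nonneg k).
  assert (HK : 1 <= INR k) by (apply (le_INR 1); exact hk).
  pose proof (u_pos k). pose proof weight_sum_lower. pose proof weight_sum_ge_1.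
  replace (p * p * INR k * V k) with (p * INR k * (p * V k)) by ring.
  destruct (Rle_lt_dec (q * r) (p * INR k)) as [Hheavy | Hlight].
  - pose proof (tail_overshoot_bound_heavy k hk Hheavy) as HpV.
    apply Rle_trans with (INR k * (q * (r + INR k) * u k * (p + q * r) / (INR k + 1))).
    { replace (p * INR k * (p * V k)) with (INR k * (p * (p * V k))) by ring.
      apply Rmult_le_compat_l; lra. }
    replace (INR k * (q * (r + INR k) * u k * (p + q * r) / (INR k + 1)))
      with (q * (r + INR k) * u k * ((INR k / (INR k + 1)) * (p + q * r))) by (field; lra).
    apply Rmult_le_compat_l; [apply Rmult_le_pos; nra|].
    assert (INR k / (INR k + 1) <= 1)
      by (apply (Rmult_le_reg_r (INR k + 1)); [lra | field_simplify; lra]).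
    assert (p + q * r <= 2 * M - 1) by nra.
    apply Rle_trans with (1 * (p + q * r)); [apply Rmult_le_compat_r; nra | lra].
  - destruct (tail_overshoot_bound_light k hk Hlight) as [HpV HkM].
    apply Rle_trans with (p * INR k * (u k * (INR k + (M - 1)))); [apply Rmult_le_compat_l; nra|].
    apply Rle_trans with (q * r * (u k * (2 * (M - 1)))); [apply Rmult_le_compat; nra|].
    assert (0 <= q * r * u k) by (apply Rmult_le_pos; nra).
    assert (0 <= q * INR k * u k * (2 * M - 1)) by (apply Rmult_le_pos; [apply Rmult_le_pos|]; nra).
    lra.
Qed.

Lemma shifted_weight_expand (k n : nat) :
  shifted_weight r q k n = INR n ^ 2 * u n + ((INR k - 2) * (INR n * u n) + (- (INR k - 1)) * u n).
Proof. unfold shifted_weight. ring. Qed.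

Lemma ex_series_shifted_weight (k : nat) : ex_series (shifted_weight r q k).
Proof.
  apply (ex_series_ext (fun n => INR n ^ 2 * u n + ((INR k - 2) * (INR n * u n) + (- (INR k - 1)) * u n))).
  - intros n. symmetry. apply shifted_weight_expand.
  - repeat apply ex_series_Rplus; try apply ex_series_Rscal; assumption.
Qed.

Lemma ex_series_shifted_mom (k : nat) : ex_series (fun i => shifted_weight r q k (2 + i)).
Proof. apply (ex_series_incr_n (shifted_weight r q k) 2), ex_series_shifted_weight. Qed.

(* S_k in closed form: the terms n = 0, 1 contribute 1 - k, the full series is
   E[N^2] + (k-2) E[N] - (k-1) up to the factor p^(-r), and the moment
   identities eliminate E[N] and E[N^2]. *)
Lemma shifted_mom_closed (k : nat) :
  p ^ 3 * shifted_mom r q k =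
  r * (r + 1) * q ^ 2 * p * M + (INR k - 1) * (p ^ 2 * q * r * M - p ^ 3 * (M - 1)).
Proof.
  set (m1 := Series (fun n => INR n * u n)). set (m2 := Series (fun n => INR n ^ 2 * u n)).
  assert (Hfull : Series (shifted_weight r q k) = m2 + (INR k - 2) * m1 - (INR k - 1) * M).
  { rewrite (Series_ext _ _ (shifted_weight_expand k)), !Series_plus, !Series_scal_l;
      [unfold m1, m2; ring | ..];
      repeat apply ex_series_Rplus; try apply ex_series_Rscal; assumption. }
  assert (E : shifted_mom r q k = m2 + (INR k - 2) * m1 - (INR k - 1) * M + (INR k - 1)).
  { rewrite <- Hfull, (Series_incr_n _ 2 ltac:(lia) (ex_series_shifted_weight k)).
    unfold shifted_mom. simpl. unfold shifted_weight. rewrite nb_weight_0, nb_weight_1. simpl. ring. }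
  rewrite E.
  replace (p ^ 3 * (m2 + (INR k - 2) * m1 - (INR k - 1) * M + (INR k - 1)))
    with (p ^ 2 * (p * m2) + (INR k - 2) * p ^ 2 * (p * m1) - (INR k - 1) * p ^ 3 * (M - 1)) by ring.
  unfold m2. rewrite second_mom_eq. fold m1.
  replace (p ^ 2 * (q * ((r + 1) * m1 + r * M)))
    with (p * q * (r + 1) * (p * m1) + p ^ 2 * q * r * M) by ring.
  unfold m1. rewrite mean_eq. ring.
Qed.

Lemma shifted_mom_upper (k : nat) : (1 <= k)%nat ->
  p ^ 3 * shifted_mom r q k <= r * q * (r + INR k) * ((1 + q) * M - q).
Proof.
  intros hk. rewrite shifted_mom_closed.
  assert (HK : 1 <= INR k) by (apply (le_INR 1); exact hk). pose proof weight_sum_ge_1.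
  assert (H1 : r * (r + 1) * q ^ 2 * p * M <= r * q * (r + 1) * M).
  { replace (r * (r + 1) * q ^ 2 * p * M) with (r * q * (r + 1) * M * (q * p)) by ring.
    rewrite <- (Rmult_1_r (r * q * (r + 1) * M)) at 2.
    apply Rmult_le_compat_l; [repeat apply Rmult_le_pos; lra | nra]. }
  assert (H2 : (INR k - 1) * (p ^ 2 * q * r * M) <= r * q * (INR k - 1) * M).
  { replace ((INR k - 1) * (p ^ 2 * q * r * M)) with (r * q * (INR k - 1) * M * p ^ 2) by ring.
    rewrite <- (Rmult_1_r (r * q * (INR k - 1) * M)) at 2.
    apply Rmult_le_compat_l; [repeat apply Rmult_le_pos; lra | simpl; nra]. }
  assert (H3 : 0 <= (INR k - 1) * p ^ 3 * (M - 1))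
    by (apply Rmult_le_pos; [apply Rmult_le_pos; [lra | apply pow_le; lra] | lra]).
  assert (H4 : r * q * (r + INR k) * M <= r * q * (r + INR k) * ((1 + q) * M - q))
    by (apply Rmult_le_compat_l; [repeat apply Rmult_le_pos; lra | nra]).
  nra.
Qed.

Lemma head_sum_upper (k : nat) : INR k * u k <= q * r * L k.
Proof.
  induction k as [|k IH]; [simpl; lra|].
  rewrite Rmult_comm, nb_weight_succ. simpl head_sum.
  pose proof (pos_INR k). pose proof (u_pos k).
  assert (0 <= INR k * u k) by (apply Rmult_le_pos; lra).
  assert (q * (INR k * u k) <= INR k * u k) by nra.
  replace (q * (r + INR k) * u k) with (q * r * u k + q * (INR k * u k)) by ring. lra.
Qed.

Lemma head_sum_combination_nonneg (k : nat) : 0 <= INR k * u k + (p * INR k - q * r) * L k.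
Proof.
  induction k as [|k IH]; [simpl; lra|].
  assert (E : INR (S k) * u (S k) + (p * INR (S k) - q * r) * L (S k) =
              INR k * u k + (p * INR k - q * r) * L k + p * L (S k)).
  { rewrite Rmult_comm, nb_weight_succ. simpl head_sum. rewrite S_INR. ring. }
  rewrite E. pose proof (head_sum_nonneg (S k)). nra.
Qed.

End Moments.

Definition excess (z : R) (j : nat) : R := pospart (INR j - z).

Lemma excess_nonneg (z : R) (j : nat) : 0 <= excess z j.
Proof. apply Rmax_r. Qed.

Lemma excess_ge (z : R) (j : nat) : INR j - z <= excess z j.
Proof. apply Rmax_l. Qed.

Lemma excess_below (z : R) (j : nat) : INR j <= z -> excess z j = 0.
Proof. intros H. apply Rmax_right. lra. Qed.

Lemma excess_above (z : R) (j : nat) : z <= INR j -> excess z j = INR j - z.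
Proof. intros H. apply Rmax_left. lra. Qed.

Lemma excess_le (z : R) (j : nat) : 0 <= z -> excess z j <= INR j.
Proof. intros H. pose proof (pos_INR j). apply Rmax_lub; lra. Qed.

Definition stein_tail (r p z : R) (k : nat) : R :=
  Series (fun i => nb_weight r (1 - p) (k + i) * (excess z (k + i) - negbin_Epos r p z)).

Lemma g_z_eq (r p z : R) (k : nat) : 0 < r -> p < 1 -> (1 <= k)%nat ->
  g_z r p z k = - stein_tail r p z k / (INR k * nb_weight r (1 - p) k).
Proof.
  intros hr hp hk. destruct k as [|k]; [lia|].
  unfold g_z, stein_tail, Rdiv. rewrite Ropp_mult_distr_l_reverse. f_equal.
  rewrite <- Series_scal_r. apply Series_ext. intros i. cbv zeta.
  replace (S k - 1)%nat with k by lia. replace (S k + i - S k)%nat with i by lia.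
  unfold nb_weight, binc, excess. rewrite pow_add, fact_simpl, mult_INR.
  pose proof (INR_fact_lt_0 k). pose proof (INR_fact_lt_0 (S k + i)).
  pose proof (rising_pos r (S k) hr). pose proof (rising_pos r (S k + i) hr).
  assert (0 < (1 - p) ^ S k) by (apply pow_lt; lra).
  assert (0 < INR (S k)) by (apply lt_0_INR; lia).
  field. repeat split; lra.
Qed.

(* Using (k+1) u_(k+1) = q (r+k) u_k, both cases reduce to the sign and size of
   q(r+k) G_k - k G_(k+1). *)
Lemma fdiff_g_z_eq (r p z : R) (k : nat) : 0 < r -> 0 < p < 1 -> (1 <= k)%nat ->
  fdiff (g_z r p z) k =
  ((1 - p) * (r + INR k) * stein_tail r p z k - INR k * stein_tail r p z (S k))
  / (INR k * (1 - p) * (r + INR k) * nb_weight r (1 - p) k).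
Proof.
  intros hr hp hk. unfold fdiff.
  rewrite (g_z_eq r p z (S k)), (g_z_eq r p z k) by (lra || lia).
  rewrite (Rmult_comm (INR (S k))), nb_weight_succ.
  assert (1 <= INR k) by (apply (le_INR 1); exact hk).
  assert (0 < nb_weight r (1 - p) k)
    by (apply Rmult_lt_0_compat; [apply binc_pos; lra | apply pow_lt; lra]).
  field. repeat split; lra.
Qed.

Section SteinSolution.

Variables r p z : R.
Hypothesis hr : 1 < r.
Hypothesis hp : 0 < p < 1.
Hypothesis hz : 0 < z.
Local Notation q := (1 - p).
Local Notation u := (nb_weight r (1 - p)).
Local Notation M := (Series (nb_weight r (1 - p))).
Local Notation U := (tail_sum r (1 - p)).
Local Notation L := (head_sum r (1 - p)).
Local Notation V := (tail_overshoot r (1 - p)).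
Local Notation h := (excess z).
Local Notation c := (negbin_Epos r p z).
Local Notation G := (stein_tail r p z).
Local Notation Epay := (Series (fun j => nb_weight r (1 - p) j * excess z j)).

Let u_pos := nb_weight_pos r p hr hp.
Let ex_u := ex_series_weight r p hr hp.
Let ex_mom1 := ex_series_weight_mom1 r p hr hp.
Let M_ge_1 := weight_sum_ge_1 r p hr hp.

(* The payoff grows linearly, so it is summable against u. *)
Lemma ex_series_payoff : ex_series (fun j => u j * h j).
Proof.
  apply (ex_series_ext (fun j => h j * u j)); [intros j; apply Rmult_comm|].
  apply ex_series_weighted; [exact hr | exact hp|]. intros n.
  pose proof (excess_le z n ltac:(lra)). pose proof (pos_INR n).
  rewrite Rabs_pos_eq by apply excess_nonneg. nra.
Qed.

(* E[(N-z)^+] = p^r Epay with Epay = sum_j u_j h_z(j); since p^r M = 1 this is c M = Epay. *)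
Lemma Epos_weight : c * M = Epay.
Proof.
  assert (Hc : c = Rpower p r * Epay).
  { unfold negbin_Epos. rewrite <- Series_scal_l. apply Series_ext. intros n.
    unfold negbin_pmf, nb_weight, binc, excess. ring. }
  rewrite Hc, (Series_weight r p hr hp), Rpower_Ropp.
  field. apply Rgt_not_eq, exp_pos.
Qed.

Lemma Epos_nonneg : 0 <= c.
Proof.
  pose proof Epos_weight as E.
  assert (0 <= Epay)
    by (apply Series_nonneg; [intros; apply Rmult_le_pos; [apply Rlt_le, u_pos | apply excess_nonneg]
                             | apply ex_series_payoff]).
  nra.
Qed.

(* q r / p - z <= E[(N-z)^+] <= q r / p, from j - z <= h_z(j) <= j and E[N] = q r / p. *)
Lemma Epos_bounds : q * r - p * z <= p * c <= q * r.
Proof.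
  pose proof Epos_weight as E. pose proof (mean_eq r p hr hp) as Hmean.
  set (m1 := Series (fun n => INR n * u n)) in *.
  assert (Hlo : m1 - z * M <= Epay).
  { unfold m1. rewrite <- Series_scal_l, <- Series_minus by (try apply ex_series_Rscal; assumption).
    apply Series_mono;
      [| exact (ex_series_minus _ _ ex_mom1 (ex_series_Rscal z u ex_u)) | apply ex_series_payoff].
    intros n. pose proof (excess_ge z n). pose proof (u_pos n). nra. }
  assert (Hhi : Epay <= m1).
  { apply Series_mono; [| apply ex_series_payoff | exact ex_mom1].
    intros n. pose proof (excess_le z n ltac:(lra)). pose proof (u_pos n). nra. }
  split; nra.
Qed.

(* Above z the payoff is linear, so G_k = T_k - (z + c) U_k and, by the tail
   moment identity, p G_k = k u_k + beta U_k with beta = q r - p z - p c. *)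
Lemma stein_tail_above (k : nat) : z <= INR k ->
  p * G k = INR k * u k + (q * r - p * z - p * c) * U k.
Proof.
  intros hk.
  assert (E : G k = tail_mom r q k - (z + c) * U k).
  { unfold stein_tail, tail_mom, tail_sum. rewrite <- Series_scal_l, <- Series_minus.
    - apply Series_ext. intros i. rewrite excess_above; [ring|].
      rewrite plus_INR. pose proof (pos_INR i). lra.
    - apply (ex_series_tail_mom r p hr hp).
    - apply ex_series_Rscal, (ex_series_tail r p hr hp). }
  rewrite E. pose proof (tail_mom_eq r p hr hp k). nra.
Qed.

(* With U_(k+1) = U_k - u_k this yields the numerator beta V_k. *)
Lemma stein_numerator_above (k : nat) : z <= INR k ->
  q * (r + INR k) * G k - INR k * G (S k) = (q * r - p * z - p * c) * V k.
Proof.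
  intros hk.
  pose proof (stein_tail_above k hk) as E0.
  pose proof (stein_tail_above (S k) ltac:(rewrite S_INR; lra)) as E1.
  pose proof (tail_sum_succ r p hr hp k) as HU. pose proof (tail_overshoot_eq r p hr hp k) as HV.
  rewrite (Rmult_comm (INR (S k))), nb_weight_succ in E1.
  apply (Rmult_eq_reg_l p); [|lra].
  replace (p * (q * (r + INR k) * G k - INR k * G (S k)))
    with (q * (r + INR k) * (p * G k) - INR k * (p * G (S k))) by ring.
  replace (p * ((q * r - p * z - p * c) * V k)) with ((q * r - p * z - p * c) * (p * V k)) by ring.
  rewrite E0, E1, HV. replace (U (S k)) with (U k - u k) by lra. ring.
Qed.

(* Case k >= z: |beta| <= p z by the bounds on c, and the overshoot estimate. *)
Lemma fdiff_g_z_above (k : nat) : (1 <= k)%nat -> z <= INR k ->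
  Rabs (fdiff (g_z r p z) k) <= (2 * M - 1) / (p * z).
Proof.
  intros hk hkz.
  rewrite (fdiff_g_z_eq r p z k) by (lra || exact hk). rewrite stein_numerator_above by exact hkz.
  set (beta := q * r - p * z - p * c).
  assert (Hbeta : Rabs beta <= p * z) by (apply Rabs_le; pose proof Epos_bounds; unfold beta; lra).
  pose proof (tail_overshoot_bound r p hr hp k hk) as HVb.
  pose proof (tail_overshoot_nonneg r p hr hp k) as HV0.
  pose proof (u_pos k). assert (HK : 1 <= INR k) by (apply (le_INR 1); exact hk).
  assert (Hden : 0 < INR k * q * (r + INR k) * u k)
    by (apply Rmult_lt_0_compat; [apply Rmult_lt_0_compat; [apply Rmult_lt_0_compat|]|]; lra).
  unfold Rdiv. rewrite Rabs_mult, Rabs_mult, (Rabs_pos_eq (V k) HV0), Rabs_inv,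
    (Rabs_pos_eq _ (Rlt_le _ _ Hden)).
  apply Rle_trans with (p * z * V k * / (INR k * q * (r + INR k) * u k)).
  { apply Rmult_le_compat_r; [apply Rlt_le, Rinv_0_lt_compat; exact Hden|].
    apply Rmult_le_compat_r; lra. }
  (* p^2 z^2 V_k <= p^2 k^2 V_k <= k q (r+k) u_k (2M - 1). *)
  assert (Hkey : p * z * (p * z) * V k <= INR k * (q * (r + INR k) * u k * (2 * M - 1))).
  { apply Rle_trans with (INR k * (p * p * INR k * V k)); [|apply Rmult_le_compat_l; lra].
    replace (INR k * (p * p * INR k * V k)) with (p * INR k * (p * INR k) * V k) by ring.
    apply Rmult_le_compat_r; [exact HV0|]. apply Rmult_le_compat; nra. }
  apply (Rmult_le_reg_r (p * z * (INR k * q * (r + INR k) * u k)));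
    [apply Rmult_lt_0_compat; [nra | exact Hden]|].
  replace (p * z * V k * / (INR k * q * (r + INR k) * u k) * (p * z * (INR k * q * (r + INR k) * u k)))
    with (p * z * (p * z) * V k) by (field; lra).
  replace ((2 * M - 1) * / (p * z) * (p * z * (INR k * q * (r + INR k) * u k)))
    with (INR k * (q * (r + INR k) * u k * (2 * M - 1))) by (field; lra).
  exact Hkey.
Qed.

(* If the payoff vanishes below k then Epay is a tail series, and with c M = Epay:
   G_k = Epay - c U_k = c (M - U_k) = c L_k. *)
Lemma stein_tail_below (k : nat) : (forall j, (j < k)%nat -> INR j <= z) -> G k = c * L k.
Proof.
  intros Hbelow.
  assert (HH : Epay = Series (fun i => u (k + i) * h (k + i))).
  { apply (Series_incr_n_aux (fun j => u j * h j) k). intros j hj.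
    rewrite excess_below by (apply Hbelow, hj). ring. }
  unfold stein_tail. rewrite (Series_ext _ (fun i => u (k + i) * h (k + i) - c * u (k + i)))
    by (intros; ring).
  rewrite Series_minus, Series_scal_l, <- HH, <- Epos_weight, (head_tail r p hr hp k);
    [unfold tail_sum; ring | apply (ex_series_incr_n (fun j => u j * h j) k), ex_series_payoff
    | apply ex_series_Rscal, (ex_series_tail r p hr hp)].
Qed.

(* With L_(k+1) = L_k + u_k this yields the numerator -c (k u_k + (p k - q r) L_k). *)
Lemma stein_numerator_below (k : nat) : INR k < z ->
  q * (r + INR k) * G k - INR k * G (S k) = - (c * (INR k * u k + (p * INR k - q * r) * L k)).
Proof.
  intros hkz.
  assert (Hbelow : forall j, (j < S k)%nat -> INR j <= z)
    by (intros j hj; apply Rle_trans with (INR k); [apply le_INR; lia | lra]).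
  rewrite !stein_tail_below by (intros j hj; apply Hbelow; lia).
  simpl head_sum. ring.
Qed.

(* Below z a payoff term is small: for j = k+1+i with k < z, z h_z(j) <= j (i+1),
   and u_j r q <= u_k u_(i+2) by the decreasing ratios. *)
Lemma payoff_term_bound (k i : nat) : (1 <= k)%nat -> INR k < z ->
  u (S k + i) * h (S k + i) * (r * q * z) <= u k * shifted_weight r q k (2 + i).
Proof.
  intros hk hkz.
  assert (Hh : h (S k + i) * z <= INR (S k + i) * (INR i + 1)).
  { rewrite plus_INR, S_INR. pose proof (pos_INR i). pose proof (pos_INR k).
    destruct (Rle_lt_dec (INR (S k + i)) z) as [Hle | Hlt].
    - rewrite excess_below by exact Hle. nra.
    - rewrite excess_above by lra. rewrite plus_INR, S_INR in Hlt |- *. nra. }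
  pose proof (weight_shift_upper r p hr hp k (S i) hk) as Hu.
  replace (k + S i)%nat with (S k + i)%nat in Hu by lia.
  unfold shifted_weight. replace (INR (2 + i)) with (INR i + 2) by (rewrite plus_INR; simpl; ring).
  replace (u (S k + i) * h (S k + i) * (r * q * z))
    with ((u (S k + i) * (r * q)) * (h (S k + i) * z)) by ring.
  replace (u k * ((INR i + 2 + INR k - 1) * (INR i + 2 - 1) * u (2 + i)))
    with ((u k * u (S (S i))) * (INR (S k + i) * (INR i + 1)))
    by (rewrite plus_INR, S_INR; simpl; ring).
  pose proof (u_pos (S k + i)).
  apply Rmult_le_compat; [| | exact Hu | exact Hh].
  - apply Rmult_le_pos; [lra | apply Rmult_le_pos; lra].
  - apply Rmult_le_pos; [apply excess_nonneg | lra].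
Qed.

(* Summing over j > k (the payoff vanishes up to k): r q z sum_j u_j h_z(j) <= u_k S_k. *)
Lemma payoff_sum_upper (k : nat) : (1 <= k)%nat -> INR k < z ->
  Epay * (r * q * z) <= u k * shifted_mom r q k.
Proof.
  intros hk hkz.
  rewrite (Series_incr_n_aux (fun j => u j * h j) (S k)).
  2:{ intros j hj. rewrite excess_below; [ring|]. apply Rle_trans with (INR k); [apply le_INR; lia | lra]. }
  unfold shifted_mom. rewrite <- Series_scal_r, <- Series_scal_l.
  apply Series_le; [| apply ex_series_Rscal, (ex_series_shifted_mom r p hr hp)].
  intros i. split; [| apply payoff_term_bound; assumption].
  pose proof (u_pos (S k + i)). pose proof (excess_nonneg z (S k + i)).
  apply Rmult_le_pos; [apply Rmult_le_pos; lra | apply Rmult_le_pos; [apply Rmult_le_pos|]; lra].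
Qed.

(* Case k < z: 0 <= k u_k + (p k - q r) L_k <= p k M, c M = Epay, and the payoff bound. *)
Lemma fdiff_g_z_below (k : nat) : (1 <= k)%nat -> INR k < z ->
  Rabs (fdiff (g_z r p z) k) <= p * shifted_mom r q k / (z * r * q ^ 2 * (r + INR k)).
Proof.
  intros hk hkz.
  rewrite (fdiff_g_z_eq r p z k) by (lra || exact hk). rewrite stein_numerator_below by exact hkz.
  set (Y := INR k * u k + (p * INR k - q * r) * L k).
  assert (HY0 : 0 <= Y) by apply (head_sum_combination_nonneg r p hr hp).
  assert (HY : Y <= p * INR k * M).
  { pose proof (head_sum_upper r p hr hp k). pose proof (head_tail r p hr hp k).
    pose proof (tail_sum_nonneg r p hr hp k). pose proof (pos_INR k).
    assert (p * INR k * L k <= p * INR k * M) by (apply Rmult_le_compat_l; nra).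
    unfold Y. lra. }
  pose proof Epos_nonneg. pose proof Epos_weight as HcM. pose proof (payoff_sum_upper k hk hkz) as HH.
  pose proof (u_pos k). assert (HK : 1 <= INR k) by (apply (le_INR 1); exact hk).
  assert (Hden : 0 < INR k * q * (r + INR k) * u k)
    by (apply Rmult_lt_0_compat; [apply Rmult_lt_0_compat; [apply Rmult_lt_0_compat|]|]; lra).
  unfold Rdiv. rewrite Rabs_mult, Rabs_Ropp, Rabs_mult, Rabs_inv, !Rabs_pos_eq by lra.
  (* c Y <= p k c M = p k Epay <= p k u_k S_k / (r q z). *)
  assert (HcY : c * Y * (r * q * z) <= p * INR k * (u k * shifted_mom r q k)).
  { apply Rle_trans with (p * INR k * (Epay * (r * q * z))); [|apply Rmult_le_compat_l; nra].
    rewrite <- HcM. apply Rle_trans with (c * (p * INR k * M) * (r * q * z)); [|right; ring].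
    apply Rmult_le_compat_r; [apply Rmult_le_pos; [|lra]; apply Rmult_le_pos; lra|].
    apply Rmult_le_compat_l; lra. }
  apply (Rmult_le_reg_r (r * q * z * (INR k * q * (r + INR k) * u k)));
    [apply Rmult_lt_0_compat; [apply Rmult_lt_0_compat; [apply Rmult_lt_0_compat|]|]; lra|].
  replace (c * Y * / (INR k * q * (r + INR k) * u k) * (r * q * z * (INR k * q * (r + INR k) * u k)))
    with (c * Y * (r * q * z)) by (field; lra).
  replace (p * shifted_mom r q k * / (z * r * q ^ 2 * (r + INR k))
           * (r * q * z * (INR k * q * (r + INR k) * u k)))
    with (p * INR k * (u k * shifted_mom r q k)) by (field; repeat split; lra).
  exact HcY.
Qed.
End SteinSolution.

Lemma Rdiv_le_cross (a b c d : R) : 0 < b -> 0 < d -> a * d <= c * b -> a / b <= c / d.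
Proof.
  intros hb hd H. apply (Rmult_le_reg_r (b * d)); [nra|].
  replace (a / b * (b * d)) with (a * d) by (field; lra).
  replace (c / d * (b * d)) with (c * b) by (field; lra). exact H.
Qed.

Lemma Rpower_opp_shift (p r a : R) (n : nat) : 0 < p -> a = INR n ->
  Rpower p (- (r + a)) = Rpower p (- r) / p ^ n.
Proof.
  intros hp ->. replace (- (r + INR n)) with (- r + - INR n) by ring.
  rewrite Rpower_plus, (Rpower_Ropp p (INR n)), Rpower_pow by exact hp.
  field. apply pow_nonzero. lra.
Qed.

Section Bounds.

Variables r p z : R.
Hypothesis hr : 1 < r.
Hypothesis hp : 0 < p < 1.
Hypothesis hz : 0 < z.
Local Notation q := (1 - p).
Local Notation M := (Series (nb_weight r (1 - p))).

Let M_ge_1 := weight_sum_ge_1 r p hr hp.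
Let M_eq := Series_weight r p hr hp.

Lemma fdiff_g_z_large (k : nat) : (1 <= k)%nat -> z <= INR k ->
  Rabs (fdiff (g_z r p z) k) <= / z * (2 * Rpower p (- (r + 1)) - / p).
Proof.
  intros hk hkz. rewrite (Rpower_opp_shift p r 1 1), <- M_eq by (simpl; lra).
  replace (/ z * (2 * (M / p ^ 1) - / p)) with ((2 * M - 1) / (p * z)) by (field; lra).
  apply (fdiff_g_z_above r p z hr hp hz k hk hkz).
Qed.

(* For 2 <= k < z, combine the bound via S_k with the estimate of p^3 S_k. *)
Lemma fdiff_g_z_middle (k : nat) : (2 <= k)%nat -> INR k < z ->
  Rabs (fdiff (g_z r p z) k) <= / z * ((1 + / q) * Rpower p (- (r + 2)) - / p ^ 2).
Proof.
  intros hk hkz. eapply Rle_trans; [apply (fdiff_g_z_below r p z hr hp hz k); [lia | exact hkz]|].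
  rewrite (Rpower_opp_shift p r 2 2), <- M_eq by (simpl; lra).
  assert (HK : 2 <= INR k) by (apply (le_INR 2); exact hk).
  pose proof (shifted_mom_upper r p hr hp k ltac:(lia)) as Hcore.
  set (S := shifted_mom r q k) in *.
  assert (Hq2 : 0 < q ^ 2) by (apply pow_lt; lra). assert (Hp2 : 0 < p ^ 2) by (apply pow_lt; lra).
  replace (/ z * ((1 + / q) * (M / p ^ 2) - / p ^ 2)) with (((1 + q) * M - q) / (q * p ^ 2 * z))
    by (field; repeat split; lra).
  apply Rdiv_le_cross; [repeat apply Rmult_lt_0_compat; lra | repeat apply Rmult_lt_0_compat; lra |].
  replace (p * S * (q * p ^ 2 * z)) with (p ^ 3 * S * (q * z)) by ring.
  replace (((1 + q) * M - q) * (z * r * q ^ 2 * (r + INR k)))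
    with (r * q * (r + INR k) * ((1 + q) * M - q) * (q * z)) by ring.
  apply Rmult_le_compat_r; [nra | exact Hcore].
Qed.

(* For k = 1 < z: p^3 S_1 = r (r+1) q^2 p M and p M <= (r+1)(2M - 1). *)
Lemma fdiff_g_z_first : 1 < z ->
  Rabs (fdiff (g_z r p z) 1) <= (r + 1) / z * (2 * Rpower p (- (r + 2)) - / p ^ 2).
Proof.
  intros hz1. eapply Rle_trans; [apply (fdiff_g_z_below r p z hr hp hz 1); [lia | simpl; lra]|].
  rewrite (Rpower_opp_shift p r 2 2), <- M_eq by (simpl; lra).
  pose proof (shifted_mom_closed r p hr hp 1) as E. simpl INR in E |- *.
  set (S := shifted_mom r q 1) in *.
  assert (Hq2 : 0 < q ^ 2) by (apply pow_lt; lra). assert (Hp2 : 0 < p ^ 2) by (apply pow_lt; lra).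
  replace ((r + 1) / z * (2 * (M / p ^ 2) - / p ^ 2)) with ((r + 1) * (2 * M - 1) / (p ^ 2 * z))
    by (field; lra).
  apply Rdiv_le_cross; [repeat apply Rmult_lt_0_compat; lra | repeat apply Rmult_lt_0_compat; lra |].
  replace (p * S * (p ^ 2 * z)) with (p ^ 3 * S * z) by ring. rewrite E.
  replace ((r + 1) * (2 * M - 1) * (z * r * q ^ 2 * (r + 1)))
    with (r * (r + 1) * q ^ 2 * ((r + 1) * (2 * M - 1)) * z) by ring.
  apply Rmult_le_compat_r; [lra|].
  replace ((r * (r + 1) * q ^ 2 * p * M + (1 - 1) * (p ^ 2 * q * r * M - p ^ 3 * (M - 1))))
    with (r * (r + 1) * q ^ 2 * (p * M)) by ring.
  apply Rmult_le_compat_l; [repeat apply Rmult_le_pos; lra | nra].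
Qed.

Lemma uniform_bound_nonneg : 0 <= (1 + / q) * Rpower p (- (r + 2)) - / p ^ 2.
Proof.
  rewrite (Rpower_opp_shift p r 2 2), <- M_eq by (simpl; lra).
  assert (Hq : 0 < / q) by (apply Rinv_0_lt_compat; lra).
  assert (Hp2 : 0 < / p ^ 2) by (apply Rinv_0_lt_compat, pow_lt; lra).
  unfold Rdiv. assert (0 <= / q * (M * / p ^ 2)) by (apply Rmult_le_pos; nra). nra.
Qed.

(* ... and dominates the bound for k >= z, since (2M-1) p q <= (r+1)((1+q)M - q). *)
Lemma large_bound_le_uniform :
  / z * (2 * Rpower p (- (r + 1)) - / p)
  <= (r + 1) / z * ((1 + / q) * Rpower p (- (r + 2)) - / p ^ 2).
Proof.
  rewrite (Rpower_opp_shift p r 1 1), (Rpower_opp_shift p r 2 2), <- M_eq by (simpl; lra).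
  replace (/ z * (2 * (M / p ^ 1) - / p)) with ((2 * M - 1) * p * q / (p ^ 2 * q * z)) by (field; lra).
  replace ((r + 1) / z * ((1 + / q) * (M / p ^ 2) - / p ^ 2))
    with ((r + 1) * ((1 + q) * M - q) / (p ^ 2 * q * z)) by (field; lra).
  apply Rdiv_le_cross; [repeat apply Rmult_lt_0_compat; lra | repeat apply Rmult_lt_0_compat; lra |].
  apply Rmult_le_compat_r; [apply Rmult_le_pos; [apply Rmult_le_pos; [apply pow_le|]|]; lra|].
  assert (0 <= q * (2 * M - 1) + p) by nra.
  assert ((2 * M - 1) * p * q <= 2 * M - 1) by nra. nra.
Qed.

Lemma fdiff_g_z_uniform (k : nat) : (1 <= k)%nat ->
  Rabs (fdiff (g_z r p z) k) <= (r + 1) / z * ((1 + / q) * Rpower p (- (r + 2)) - / p ^ 2).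
Proof.
  intros hk. pose proof uniform_bound_nonneg as Htheta.
  destruct (Rle_lt_dec z (INR k)) as [Hbig | Hsmall].
  - eapply Rle_trans; [apply (fdiff_g_z_large k hk Hbig) | apply large_bound_le_uniform].
  - destruct (Nat.eq_dec k 1) as [-> | Hk1].
    + eapply Rle_trans; [apply fdiff_g_z_first; simpl in Hsmall; lra|].
      assert (Hq : 1 <= / q) by (rewrite <- Rinv_1; apply Rinv_le_contravar; lra).
      apply Rmult_le_compat_l; [apply Rdiv_le_0_compat; lra|].
      apply Rplus_le_compat_r, Rmult_le_compat_r; [left; apply exp_pos | lra].
    + eapply Rle_trans; [apply (fdiff_g_z_middle k); [lia | exact Hsmall]|].
      unfold Rdiv. rewrite Rmult_assoc, <- (Rmult_1_l (/ z * _)) at 1.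
      apply Rmult_le_compat_r; [apply Rmult_le_pos; [apply Rlt_le, Rinv_0_lt_compat|]; lra | lra].
Qed.

End Bounds.

Theorem lemma2p2 (r p z : R) (hr : 1 < r) (hp0 : 0 < p) (hp1 : p < 1) (hz : 1 < z) :
  let q := 1 - p in
  (forall k : nat, (1 <= k)%nat -> z <= INR k ->
     Rabs (fdiff (g_z r p z) k)
       <= / z * (2 * Rpower p (- (r + 1)) - / p)) /\
  (forall k : nat, (2 <= k)%nat -> INR k < z ->
     Rabs (fdiff (g_z r p z) k)
       <= / z * ((1 + / q) * Rpower p (- (r + 2)) - / p ^ 2)) /\
  (Rabs (fdiff (g_z r p z) 1)
       <= (r + 1) / z * (2 * Rpower p (- (r + 2)) - / p ^ 2)) /\
  (forall k : nat, (1 <= k)%nat ->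
     Rabs (fdiff (g_z r p z) k)
       <= (r + 1) / z * ((1 + / q) * Rpower p (- (r + 2)) - / p ^ 2)).
Proof.
  intros q.
  assert (hp : 0 < p < 1) by lra. assert (hz0 : 0 < z) by lra.
  split; [|split; [|split]].
  - exact (fdiff_g_z_large r p z hr hp hz0).
  - exact (fdiff_g_z_middle r p z hr hp hz0).
  - exact (fdiff_g_z_first r p z hr hp hz0 hz).
  - exact (fdiff_g_z_uniform r p z hr hp hz0).
Qed.
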